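(* Let $01234$ be a convex pentagon inscribed in a circle of radius $R$, with vertices in cyclic order and area $A$. Let $$a_0=|23|,\quad a_1=|34|,\quad a_2=|40|,\quad a_3=|01|,\quad a_4=|12|,$$ and let $X=|14|$. Put $p=a_2a_3$, $P=a_0a_1a_4$, $q=a_2^2+a_3^2$, and $Q=a_0^2+a_1^2+a_4^2$. Then $$(X^2-q)\,4AR=p\,[(Q-q)X+2P].$$
   Context: $|ij|$ denotes the distance between vertices $i$ and $j$. *)

From Stdlib Require Import Reals.
Open Scope R_scope.

Definition point := (R * R)%type.

Definition pdist (p q : point) : R :=
  sqrt ((fst p - fst q) ^ 2 + (snd p - snd q) ^ 2).

(* cross product of (q - p) and (r - p): positive iff p, q, r turn counterclockwise *)
Definition orient (p q r : point) : R :=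
  (fst q - fst p) * (snd r - snd p) - (snd q - snd p) * (fst r - fst p).

Definition vert (V0 V1 V2 V3 V4 : point) (i : nat) : point :=
  match Nat.modulo i 5 with
  | 0%nat => V0 | 1%nat => V1 | 2%nat => V2 | 3%nat => V3 | _ => V4
  end.

Definition convex_pentagon (V0 V1 V2 V3 V4 : point) : Prop :=
  let v := vert V0 V1 V2 V3 V4 in
  (forall i j : nat, (i < 5)%nat -> (j < 5)%nat -> j <> i -> j <> Nat.modulo (S i) 5 ->
     orient (v i) (v (S i)) (v j) > 0) \/
  (forall i j : nat, (i < 5)%nat -> (j < 5)%nat -> j <> i -> j <> Nat.modulo (S i) 5 ->
     orient (v i) (v (S i)) (v j) < 0).

(* area of the polygon (shoelace formula) *)
Definition pentagon_area (V0 V1 V2 V3 V4 : point) : R :=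
  let v := vert V0 V1 V2 V3 V4 in
  Rabs (sum_f_R0 (fun i => fst (v i) * snd (v (S i)) - fst (v (S i)) * snd (v i)) 4) / 2.

(** Triangulate the pentagon from vertex [4] into the triangles [014], [124]
    and [234], of signed doubled areas [o1], [o2], [o3].  For a triangle with
    side lengths [a, b, c] inscribed in a circle of radius [R] one has
    [abc = 2R |o|], and convexity makes the three [o]'s share a sign, so
    [a2 a3 X], [a4 X Y] and [a0 a1 Y] (with [Y = |24|]) are [2R] times the
    areas, while [2A = |o1 + o2 + o3|].  After substituting these and
    multiplying by [X^2 Y^2], the claim becomes a polynomial identity in the
    coordinates that lies in the ideal generated by the five circle equations. *)

From Stdlib Require Import Reals Lra Lia Nsatz.
Open Scope R_scope.

Lemma pdist_pow2 (P Q : point) :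
  pdist P Q ^ 2 = (fst P - fst Q) ^ 2 + (snd P - snd Q) ^ 2.
Proof. apply pow2_sqrt, Rplus_le_le_0_compat; apply pow2_ge_0. Qed.

Lemma pdist_ge0 (P Q : point) : 0 <= pdist P Q.
Proof. apply sqrt_pos. Qed.

Lemma pdist_sym (P Q : point) : pdist P Q = pdist Q P.
Proof. unfold pdist; f_equal; ring. Qed.

Lemma orient_cyclic (P Q S : point) : orient P Q S = orient Q S P.
Proof. unfold orient; ring. Qed.

Lemma on_circle_pow2 (O P : point) (Rad : R) :
  pdist O P = Rad -> (fst O - fst P) ^ 2 + (snd O - snd P) ^ 2 = Rad ^ 2.
Proof. intros <-; symmetry; apply pdist_pow2. Qed.

Lemma circumradius_side_product (A B C O : point) (Rad : R) :
  0 <= Rad -> pdist O A = Rad -> pdist O B = Rad -> pdist O C = Rad ->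
  pdist A B * pdist B C * pdist C A = 2 * Rad * Rabs (orient A B C).
Proof.
  intros HR HA HB HC.
  apply Rsqr_inj.
  - repeat apply Rmult_le_pos; apply pdist_ge0.
  - apply Rmult_le_pos; [lra | apply Rabs_pos].
  - rewrite !Rsqr_pow2, !Rpow_mult_distr, pow2_abs, !pdist_pow2.
    apply on_circle_pow2 in HA, HB, HC.
    destruct A as [xa ya], B as [xb yb], C as [xc yc], O as [xo yo].
    (* [nsatz] does not reify [pow], so the squares are expanded first. *)
    unfold orient; cbn [fst snd pow] in *.
    nsatz.
Qed.

Lemma inscribed_fan_identity (V0 V1 V2 V3 V4 O : point) (Rad : R) :
  pdist O V0 = Rad -> pdist O V1 = Rad -> pdist O V2 = Rad ->
  pdist O V3 = Rad -> pdist O V4 = Rad ->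
  let X := pdist V1 V4 in
  let Y := pdist V4 V2 in
  let q := pdist V4 V0 ^ 2 + pdist V0 V1 ^ 2 in
  let Q := pdist V2 V3 ^ 2 + pdist V3 V4 ^ 2 + pdist V1 V2 ^ 2 in
  let o1 := orient V0 V1 V4 in
  let o2 := orient V1 V2 V4 in
  let o3 := orient V2 V3 V4 in
  (X ^ 2 - q) * (o1 + o2 + o3) * X ^ 2 * Y ^ 2
  = o1 * (Q - q) * X ^ 2 * Y ^ 2 + 8 * Rad ^ 2 * o1 * o2 * o3.
Proof.
  intros H0 H1 H2 H3 H4 X Y q Q o1 o2 o3; subst X Y q Q o1 o2 o3.
  rewrite !pdist_pow2.
  apply on_circle_pow2 in H0, H1, H2, H3, H4.
  destruct V0 as [x0 y0], V1 as [x1 y1], V2 as [x2 y2], V3 as [x3 y3],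
    V4 as [x4 y4], O as [xo yo].
  unfold orient; cbn [fst snd pow] in *.
  nsatz.
Qed.

Lemma convex_pentagon_fan_sign (V0 V1 V2 V3 V4 : point) :
  convex_pentagon V0 V1 V2 V3 V4 ->
  exists s, s * s = 1 /\ 0 < s * orient V0 V1 V4 /\
    0 < s * orient V1 V2 V4 /\ 0 < s * orient V2 V3 V4.
Proof.
  intros [Hconv | Hconv];
    [exists 1 | exists (-1)];
    pose proof (Hconv 0%nat 4%nat) as H014;
    pose proof (Hconv 1%nat 4%nat) as H124;
    pose proof (Hconv 2%nat 4%nat) as H234;
    cbn in H014, H124, H234;
    specialize (H014 ltac:(lia) ltac:(lia) ltac:(lia) ltac:(lia));
    specialize (H124 ltac:(lia) ltac:(lia) ltac:(lia) ltac:(lia));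
    specialize (H234 ltac:(lia) ltac:(lia) ltac:(lia) ltac:(lia));
    lra.
Qed.

Lemma pentagon_area_fan (V0 V1 V2 V3 V4 : point) :
  pentagon_area V0 V1 V2 V3 V4
  = Rabs (orient V0 V1 V4 + orient V1 V2 V4 + orient V2 V3 V4) / 2.
Proof. unfold pentagon_area, orient; cbn; do 2 f_equal; ring. Qed.

Lemma Rabs_sign_unit (s x : R) : s * s = 1 -> 0 <= s * x -> Rabs x = s * x.
Proof.
  intros Hs Hx.
  rewrite <- (Rabs_pos_eq (s * x) Hx), Rabs_mult.
  replace (Rabs s) with 1; [ring |].
  destruct (Rcase_abs s); [rewrite Rabs_left | rewrite Rabs_right]; nra.
Qed.

Lemma fan_identity_cancel (a0 a1 a2 a3 a4 X Y Rad s o1 o2 o3 A : R) :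
  X <> 0 -> Y <> 0 -> s * s = 1 ->
  2 * A = s * (o1 + o2 + o3) ->
  a2 * a3 * X = 2 * Rad * (s * o1) ->
  a4 * X * Y = 2 * Rad * (s * o2) ->
  a0 * a1 * Y = 2 * Rad * (s * o3) ->
  (X ^ 2 - (a2 ^ 2 + a3 ^ 2)) * (o1 + o2 + o3) * X ^ 2 * Y ^ 2
  = o1 * ((a0 ^ 2 + a1 ^ 2 + a4 ^ 2) - (a2 ^ 2 + a3 ^ 2)) * X ^ 2 * Y ^ 2
    + 8 * Rad ^ 2 * o1 * o2 * o3 ->
  (X ^ 2 - (a2 ^ 2 + a3 ^ 2)) * (4 * A * Rad)
  = a2 * a3 * (((a0 ^ 2 + a1 ^ 2 + a4 ^ 2) - (a2 ^ 2 + a3 ^ 2)) * X + 2 * (a0 * a1 * a4)).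
Proof.
  intros HX HY Hs HA H014 H124 H234 Hfan.
  apply (Rmult_eq_reg_r (X ^ 2 * Y ^ 2)).
  - cbn [pow] in *. nsatz.
  - apply Rmult_integral_contrapositive; split; apply pow_nonzero; assumption.
Qed.

Theorem corollary5 (V0 V1 V2 V3 V4 O : point) (Rad : R) :
  convex_pentagon V0 V1 V2 V3 V4 ->
  0 < Rad ->
  pdist O V0 = Rad -> pdist O V1 = Rad -> pdist O V2 = Rad ->
  pdist O V3 = Rad -> pdist O V4 = Rad ->
  let A := pentagon_area V0 V1 V2 V3 V4 in
  let a0 := pdist V2 V3 in
  let a1 := pdist V3 V4 in
  let a2 := pdist V4 V0 in
  let a3 := pdist V0 V1 in
  let a4 := pdist V1 V2 in
  let X := pdist V1 V4 in
  let p := a2 * a3 in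
  let P := a0 * a1 * a4 in
  let q := a2 ^ 2 + a3 ^ 2 in
  let Q := a0 ^ 2 + a1 ^ 2 + a4 ^ 2 in
  (X ^ 2 - q) * (4 * A * Rad) = p * ((Q - q) * X + 2 * P).
Proof.
  intros Hconv HR H0 H1 H2 H3 H4 A a0 a1 a2 a3 a4 X p P q Q.
  destruct (convex_pentagon_fan_sign _ _ _ _ _ Hconv) as (s & Hs & Ho1 & Ho2 & Ho3).
  assert (HR0 : 0 <= Rad) by lra.
  assert (H014 : a2 * a3 * X = 2 * Rad * (s * orient V0 V1 V4)).
  { rewrite <- (Rabs_sign_unit s) by lra.
    rewrite <- (orient_cyclic V4).
    apply (circumradius_side_product _ _ _ O); assumption. }
  assert (H124 : a4 * X * pdist V4 V2 = 2 * Rad * (s * orient V1 V2 V4)).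
  { rewrite <- (Rabs_sign_unit s) by lra.
    rewrite <- (circumradius_side_product _ _ _ O Rad) by assumption.
    subst a4 X; rewrite (pdist_sym V1 V4), (pdist_sym V4 V2); ring. }
  assert (H234 : a0 * a1 * pdist V4 V2 = 2 * Rad * (s * orient V2 V3 V4)).
  { rewrite <- (Rabs_sign_unit s) by lra.
    apply (circumradius_side_product _ _ _ O); assumption. }
  apply (fan_identity_cancel _ _ _ _ _ _ (pdist V4 V2) Rad s
           (orient V0 V1 V4) (orient V1 V2 V4) (orient V2 V3 V4));
    try assumption.
  - intros HX; rewrite HX in H014; nra.
  - intros HY; rewrite HY in H234; nra.
  - subst A; rewrite pentagon_area_fan, (Rabs_sign_unit s) by lra; field.
  - exact (inscribed_fan_identity V0 V1 V2 V3 V4 O Rad H0 H1 H2 H3 H4).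
Qed.
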